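(* In the setting of the Pairwise Learning algorithm described in the context, suppose that every $1$-dimensional reduced graph of $G$ contains exactly one source component and that for every $\theta\neq\theta^*$ and every $1$-dimensional reduced graph $\mathcal{H}_1$ with source component $\mathcal{S}_{\mathcal{H}_1}$, $\sum_{j\in\mathcal{S}_{\mathcal{H}_1}}D(\ell_j(\cdot\mid\theta^* )\|\ell_j(\cdot\mid\theta))\neq0$. Let $i$ be a non-faulty agent. If there exists $\tilde\theta\in\Theta$ such that for every $\theta\neq\tilde\theta$, $r_t^i(\tilde\theta,\theta)\to+\infty$ almost surely and $r_t^i(\theta,\tilde\theta)\to-\infty$ almost surely, then $\tilde\theta=\theta^*$.
   Context: Network: $n$ agents on a directed graph $G=(\mathcal{V},\mathcal{E})$, $\mathcal{V}=\{1,\dots,n\}$, $\mathcal{I}_i$ the incoming neighbors of $i$; synchronous iterations; an unknown set of at most $f$ Byzantine agents behaving arbitrarily; non-faulty agents know $f$; missing messages are replaced by a default value. Observations: $\Theta=\{\theta_1,\dots,\theta_m\}$ with unknown true state $\theta^*$; agent $i$ has finite signal space $\mathcal{S}_i$ and likelihoods $\ell_i(\cdot\mid\theta)$ with full support; in iteration $t$ it observes $s_t^i\sim\ell_i(\cdot\mid\theta^* )$, independently across agents and iterations; $\ell_i(s_{1,t}^i\mid\theta)=\prod_{r=1}^t\ell_i(s_r^i\mid\theta)$. $D$ is the Kullback–Leibler divergence. A $1$-dimensional reduced graph of $G$ is obtained by removing all faulty nodes and incident links and then, for each non-faulty node, up to $f$ additional incoming links; a source component is a strongly connected component with no incoming links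 from outside. Pairwise Learning at non-faulty agent $i$: $r_0^i(\theta_1,\theta_2)=0$ for all ordered pairs $\theta_1\ne\theta_2$; in iteration $t\ge1$, for each ordered pair, transmit $r_{t-1}^i(\theta_1,\theta_2)$, observe $s_t^i$, receive $\tilde r_{t-1}^j(\theta_1,\theta_2)$ from all $j\in\mathcal{I}_i$, discard the $f$ smallest and $f$ largest received values (remaining index set $\mathcal{I}_i^*[t]$), and set $r_t^i(\theta_1,\theta_2)=\frac{\sum_{j\in\mathcal{I}_i^*[t]}\tilde r_{t-1}^j(\theta_1,\theta_2)+r_{t-1}^i(\theta_1,\theta_2)}{|\mathcal{I}_i^*[t]|+1}+\log\frac{\ell_i(s_{1,t}^i\mid\theta_1)}{\ell_i(s_{1,t}^i\mid\theta_2)}$. *)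

From HB Require Import structures.
From mathcomp Require Import all_boot all_order all_algebra.
From mathcomp Require Import all_classical all_reals all_analysis.
Set Implicit Arguments. Unset Strict Implicit. Unset Printing Implicit Defensive.
Import Order.TTheory GRing.Theory Num.Theory.
Import numFieldNormedType.Exports.
Local Open Scope classical_set_scope.
Local Open Scope ring_scope.

(* Incoming neighbours of agent i in the directed graph G (edge j -> i is G j i);
   self-loops are ignored. *)
Definition in_nbrs (n : nat) (G : rel 'I_n) (i : 'I_n) : {set 'I_n} :=
  finset (fun j => G j i && (j != i)).

Definition reduced_graph (n f : nat) (G : rel 'I_n) (F : {set 'I_n})
    (H : rel 'I_n) : Prop :=
  (forall j k, H j k -> [&& G j k, j != k, j \notin F & k \notin F]) /\
  (forall k, k \notin F ->
     (#|finset (fun j => [&& G j k, j != k, j \notin F & ~~ H j k])| <= f)%N).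

(* Sc is a source component of the reduced graph H (vertex set V \ F):
   a strongly connected component with no incoming link from outside. *)
Definition source_component (n : nat) (F : {set 'I_n}) (H : rel 'I_n)
    (Sc : {set 'I_n}) : Prop :=
  (exists2 j, j \notin F &
     Sc = finset (fun k => [&& k \notin F, connect H j k & connect H k j])) /\
  (forall j k, k \in Sc -> H j k -> j \in Sc).

Definition KL (R : realType) (T : finType) (p q : T -> R) : R :=
  \sum_(x : T) p x * ln (p x / q x).

Definition likelihoods (R : realType) (n : nat) (Theta : finType)
    (S : 'I_n -> finType) (l : forall i, S i -> Theta -> R) : Prop :=
  forall i th, (forall x, 0 < l i x th) /\ \sum_(x : S i) l i x th = 1.

(* Signals: s t i is the signal of agent i in iteration t (t >= 1).  They are
   measurable and their joint law is the product law
   prod_{t,i} l_i(. | theta_star) (independence across agents and iterations). *)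
Definition signal_model (R : realType) (d : measure_display)
    (Omega : measurableType d) (P : probability Omega R) (n : nat)
    (Theta : finType) (thstar : Theta) (S : 'I_n -> finType)
    (l : forall i, S i -> Theta -> R) (s : nat -> forall i, Omega -> S i) : Prop :=
  (forall t i x, measurable [set w | s t i w = x]) /\
  (forall (T : nat) (a : nat -> forall i, S i),
     P [set w | forall t, (1 <= t <= T)%N -> forall i, s t i w = a t i] =
     (\prod_(1 <= t < T.+1) \prod_(i < n) l i (a t i) thstar)%:E).

Definition trimmed (R : realType) (f : nat) (vals : seq R) : seq R :=
  drop f (take (size vals - f) (sort <=%R vals)).

Definition cumloglik (R : realType) (Omega : Type) (n : nat) (Theta : finType)
    (S : 'I_n -> finType) (l : forall i, S i -> Theta -> R)
    (s : nat -> forall i, Omega -> S i) (i : 'I_n) (t : nat) (a b : Theta)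
    (w : Omega) : R :=
  ln ((\prod_(1 <= r < t.+1) l i (s r i w) a) /
      (\prod_(1 <= r < t.+1) l i (s r i w) b)).

(* PL t i a b w = r^i_t(a, b) at outcome w.
   adv t j i a b w is the (arbitrary) value tilde r^j_t(a,b) that a faulty agent
   j sends to i in iteration t+1; non-faulty agents send their true state. *)
Fixpoint PL (R : realType) (Omega : Type) (n f : nat) (G : rel 'I_n)
    (F : {set 'I_n}) (Theta : finType) (S : 'I_n -> finType)
    (l : forall i, S i -> Theta -> R) (s : nat -> forall i, Omega -> S i)
    (adv : nat -> 'I_n -> 'I_n -> Theta -> Theta -> Omega -> R)
    (t : nat) : 'I_n -> Theta -> Theta -> Omega -> R :=
  if t is t'.+1 then fun i a b w =>
    let vals := [seq (if j \in F then adv t' j i a b w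
                      else PL f G F l s adv t' j a b w) | j <- enum (in_nbrs G i)] in
    let mid := trimmed f vals in
    (\sum_(x <- mid) x + PL f G F l s adv t' i a b w) / ((size mid)%:R + 1)
    + cumloglik l s i t a b w
  else fun _ _ _ _ => 0.

From HB Require Import structures.
From mathcomp Require Import all_boot all_order all_algebra.
From mathcomp Require Import all_classical all_reals all_analysis.
From mathcomp Require Import lra.
Set Implicit Arguments. Unset Strict Implicit. Unset Printing Implicit Defensive.
Import Order.TTheory GRing.Theory Num.Theory.
Import numFieldNormedType.Exports.
Local Open Scope classical_set_scope.
Local Open Scope ring_scope.

(* Suppose thtilde <> thstar, so that r^i_t(thstar, thtilde) -> -oo almost surely.
   Whatever the graph and the Byzantine agents do, this state is bounded below
   with positive probability.  The trimmed mean of the received values is at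
   least the smallest honest one, so r^i_t >= - sum_(tau <= t) D_tau, where
   -D_tau is a common lower bound of the log-likelihood ratios
   log (l_k(s^k_(1,tau) | thstar) / l_k(s^k_(1,tau) | thtilde)) of all agents k.
   Since log x >= -2 sqrt(1/x), D_tau can be taken to be 2 sum_k of the square
   root of the inverse likelihood ratio, whose expectation is rho_k^tau with
   rho_k < 1 the Bhattacharyya coefficient of l_k(. | thstar) and
   l_k(. | thtilde) (agents whose two likelihoods coincide contribute 0).
   Hence E[sum_tau D_tau] <= C uniformly, and by Markov's inequality and
   continuity from below sum_tau D_tau <= C + 1 forever with probability
   at least 1/(C+1). *)

Lemma trimmed_ge (R : realType) f (vals : seq R) c :
  (count (< c) vals <= f)%N -> {in trimmed f vals, forall x, c <= x}.
Proof.
move=> few_small x; rewrite /trimmed; set u := take _ _ => x_kept.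
have u_sorted : sorted <=%R u by apply/take_sorted/sort_sorted/le_total.
have f_lt_u : (f < size u)%N.
  by rewrite ltnNge; apply: contraTN x_kept => /drop_oversize ->.
rewrite leNgt; apply/negP => x_lt_c.
have small_prefix : count (< c) (take f u) = f.
  have : pairwise <=%R (take f u ++ drop f u).
    by rewrite cat_take_drop -sorted_pairwise //; exact: le_trans.
  rewrite pairwise_cat => /and3P[/allrelP le_x _ _].
  have : all (< c) (take f u).
    by apply/allP => y y_pre; exact: le_lt_trans (le_x y x y_pre x_kept) x_lt_c.
  by rewrite all_count size_take f_lt_u => /eqP.
have : (f < count (< c) u)%N.
  rewrite -(cat_take_drop f u) count_cat small_prefix -addn1 leq_add2l.
  by rewrite -has_count; apply/hasP; exists x.
rewrite ltnNge => /negP; apply; apply: leq_trans few_small.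
have /permP <- : perm_eq (sort <=%R vals) vals by rewrite perm_sort.
by rewrite -[X in (_ <= count _ X)%N](cat_take_drop (size vals - f)) count_cat leq_addr.
Qed.

Lemma mean_ge (R : numFieldType) (xs : seq R) x0 c :
  {in xs, forall x, c <= x} -> c <= x0 ->
  c <= (\sum_(x <- xs) x + x0) / ((size xs)%:R + 1).
Proof.
move=> xs_ge x0_ge; rewrite ler_pdivlMr ?ltr_wpDl // mulrDr mulr1 lerD //.
have -> : c * (size xs)%:R = \sum_(x <- xs) c.
  by rewrite big_const_seq count_predT -Monoid.iteropE mulr_natr.
by rewrite !big_seq; apply: ler_sum.
Qed.

Section PairwiseLearningLowerBound.
Variables (R : realType) (Omega : Type) (n f : nat) (G : rel 'I_n).
Variables (F : {set 'I_n}) (Theta : finType) (S : 'I_n -> finType).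
Variables (l : forall i, S i -> Theta -> R) (s : nat -> forall i, Omega -> S i).
Variable adv : nat -> 'I_n -> 'I_n -> Theta -> Theta -> Omega -> R.
Hypothesis card_F : (#|F| <= f)%N.

Lemma count_faulty_in_nbrs j : (count (mem F) (enum (in_nbrs G j)) <= #|F|)%N.
Proof.
rewrite -size_filter cardE; apply: uniq_leq_size; first by rewrite filter_uniq ?enum_uniq.
by move=> k; rewrite mem_filter mem_enum => /andP[].
Qed.

(* Only faulty neighbours can send a value below a common lower bound of the
   honest states, and trimming discards f >= #|F| of the smallest values. *)
Lemma PL_ge_sum (a b : Theta) (low : nat -> Omega -> R) :
  (forall k t w, low t.+1 w <= cumloglik l s k t.+1 a b w) ->
  forall t j w, j \notin F -> \sum_(r < t) low r.+1 w <= PL f G F l s adv t j a b w.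
Proof.
move=> low_le; elim=> [|t IH] j w j_honest; first by rewrite big_ord0.
rewrite big_ord_recr /=; apply: lerD; last exact: low_le.
apply: mean_ge; last exact: IH.
apply: trimmed_ge; rewrite count_map.
apply: leq_trans card_F; apply: leq_trans (count_faulty_in_nbrs j).
apply: sub_count => k /=.
by case: ifP => // k_honest; rewrite ltNge IH ?k_honest.
Qed.

End PairwiseLearningLowerBound.

Lemma ln_sqr_le (R : realType) (x : R) : 0 < x -> ln (x ^+ 2) <= 2 * x.
Proof.
move=> x_gt0; have ln_le : ln x <= x - 1.
  by have := @le_ln1Dx R (x - 1); rewrite (addrC 1) subrK; apply; lra.
rewrite lnXn // -mulr_natl; lra.
Qed.

Lemma sum_exprS_le (R : realFieldType) (x : R) T :
  0 <= x < 1 -> \sum_(t < T) x ^+ t.+1 <= (1 - x)^-1.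
Proof.
move=> /andP[x_ge0 x_lt1]; have x1_gt0 : 0 < 1 - x by rewrite subr_gt0.
apply: (@le_trans _ _ (\sum_(t < T.+1) x ^+ t)).
  by rewrite big_ord_recl lerDr expr0.
rewrite -(ler_pM2l x1_gt0) mulfV ?gt_eqF // -opprB mulNr -subrX1 opprB.
by rewrite gerBl exprn_ge0.
Qed.

Lemma bhattacharyya_lt1 (R : rcfType) (T : finType) (p q : T -> R) :
  (forall x, 0 < p x) -> (forall x, 0 < q x) ->
  \sum_x p x = 1 -> \sum_x q x = 1 -> (exists x, p x != q x) ->
  \sum_x p x * Num.sqrt (q x / p x) < 1.
Proof.
move=> p_gt0 q_gt0 sum_p sum_q [x0 pq_x0].
have amgm x : (p x * Num.sqrt (q x / p x)) *+ 2 <= p x + q x ?= iff (p x == q x).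
  have [p0 q0] := (ltW (p_gt0 x), ltW (q_gt0 x)).
  have -> : p x * Num.sqrt (q x / p x) = Num.sqrt (p x) * Num.sqrt (q x).
    rewrite sqrtrM // sqrtrV // -{1}[p x]sqr_sqrtr // expr2.
    rewrite mulrCA mulfK 1?mulrC //.
    by rewrite sqrtr_eq0 -ltNge.
  rewrite -eqr_sqrt //.
  have := leif_mean_square_scaled (Num.sqrt (p x)) (Num.sqrt (q x)).
  by rewrite !sqr_sqrtr.
have := @leif_sum _ _ predT _ _ _ (fun x _ => amgm x).
rewrite sumrMnl big_split /= sum_p sum_q -mulr2n => /lt_leif.
rewrite ltr_pMn2r // => ->; apply/forallP => /(_ x0); exact/negP.
Qed.

Lemma sum_fprod_prod (R : comPzSemiRingType) (I : finType) (T_ : I -> finType)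
    (g : forall i, T_ i -> R) :
  \sum_(t : fprod T_) \prod_i g i (t i) = \prod_i \sum_(y : T_ i) g i y.
Proof.
transitivity (\sum_(t : fprod T_) \prod_(i in I) [ffun y => g i y] (t i)).
  by apply: eq_bigr => t _; apply: eq_bigr => i _; rewrite ffunE.
rewrite (@big_fprod R 0 1 *%R +%R I T_ (fun i => [ffun y => g i y])).
under [RHS]eq_bigr do rewrite (big_tag (fun i (y : T_ i) => g i y)).
rewrite bigA_distr_big_dep; apply: eq_bigr => h _; apply: eq_bigr => i _.
by rewrite /untag; case: eqP => // ?; rewrite ffunE.
Qed.

Lemma sum_ffun_fprod_prod (R : comPzSemiRingType) (J I : finType)
    (T_ : I -> finType) (g : J -> forall i, T_ i -> R) :
  \sum_(c : {ffun J -> fprod T_}) \prod_j \prod_i g j i (c j i) =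
  \prod_j \prod_i \sum_(y : T_ i) g j i y.
Proof.
rewrite -(bigA_distr_bigA (fun j (x : fprod T_) => \prod_i g j i (x i))).
by apply: eq_bigr => j _; rewrite sum_fprod_prod.
Qed.

Lemma prod_if_eq (R : pzSemiRingType) (I : finType) (P : pred I) (k : I) (F : I -> R) :
  \prod_i (if P i && (i == k) then F i else 1) = if P k then F k else 1.
Proof. by rewrite -big_mkcond big_andbC big_mkcondr big_pred1_eq. Qed.

Section LikelihoodRatio.
Variables (R : realType) (n : nat) (Theta : finType) (S : 'I_n -> finType).
Variables (l : forall i, S i -> Theta -> R) (a b : Theta).
Hypothesis l_distr : likelihoods l.

Definition sqrt_lr i (y : S i) := Num.sqrt (l y b / l y a).

Definition bhatt_coef i := \sum_(y : S i) l y a * sqrt_lr y.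

Definition informative : {set 'I_n} := [set k | [exists y : S k, l y a != l y b]].

Lemma bhatt_coef_ge0 k : 0 <= bhatt_coef k.
Proof.
apply: sumr_ge0 => y _; rewrite mulr_ge0 ?sqrtr_ge0 //.
by case: (l_distr k a) => /(_ y) /ltW.
Qed.

Lemma bhatt_coef_lt1 k : k \in informative -> bhatt_coef k < 1.
Proof.
rewrite inE => /existsP[y neq_y].
have [[la_gt0 la_sum] [lb_gt0 lb_sum]] := (l_distr k a, l_distr k b).
by apply: bhattacharyya_lt1 => //; exists y.
Qed.

(* A configuration lists the signals of all agents in iterations 1, ..., T:
   c r i is the signal of agent i in iteration r.+1. *)
Local Notation cfg T := {ffun 'I_T -> fprod S}.

Definition cfg_lik T (c : cfg T) := \prod_(r < T) \prod_(i < n) l (c r i) a.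

Lemma cfg_lik_ge0 T (c : cfg T) : 0 <= cfg_lik c.
Proof.
apply: prodr_ge0 => r _; apply: prodr_ge0 => i _.
by case: (l_distr i a) => /(_ (c r i)) /ltW.
Qed.

Lemma sum_cfg_lik_sqrt_lr T tau k : (tau <= T)%N ->
  \sum_(c : cfg T) cfg_lik c * \prod_(r < T | (r < tau)%N) sqrt_lr (c r k) =
  bhatt_coef k ^+ tau.
Proof.
move=> le_tau.
pose g (r : 'I_T) i (y : S i) :=
  l y a * (if (r < tau)%N && (i == k) then sqrt_lr y else 1).
transitivity (\sum_(c : cfg T) \prod_r \prod_i g r i (c r i)).
  apply: eq_bigr => c _; rewrite /cfg_lik [X in _ * X]big_mkcond -big_split /=.
  apply: eq_bigr => r _; rewrite /g big_split /=; congr (_ * _).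
  by rewrite (prod_if_eq (fun _ => (r < tau)%N) k (fun i => sqrt_lr (c r i))).
rewrite sum_ffun_fprod_prod.
transitivity (\prod_(r < T) (if (r < tau)%N then bhatt_coef k else 1)).
  apply: eq_bigr => r _; rewrite -(prod_if_eq (fun _ => (r < tau)%N) k bhatt_coef).
  apply: eq_bigr => i _.
  rewrite /g; case: ifP => // _.
  by under eq_bigr do rewrite mulr1; case: (l_distr i a).
rewrite -big_mkcond /= -(big_ord_widen T (fun _ => bhatt_coef k) le_tau).
by rewrite prodr_const card_ord.
Qed.

Variables (Omega : Type) (s : nat -> forall i, Omega -> S i).

Definition signals T w : cfg T := [ffun r : 'I_T => [fprod i => s r.+1 i w]].

Definition lr_root k t w := \prod_(r < t) sqrt_lr (s r.+1 k w).

Lemma lr_root_ge0 k t w : 0 <= lr_root k t w.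
Proof. by apply: prodr_ge0 => r _; exact: sqrtr_ge0. Qed.

Lemma cumloglik_ge_lr_root k t w : - (2 * lr_root k t w) <= cumloglik l s k t a b w.
Proof.
rewrite /cumloglik !big_add1 !big_mkord.
have [[la_gt0 _] [lb_gt0 _]] := (l_distr k a, l_distr k b).
set A := \prod_(r < t) _; set B := \prod_(r < t) _.
have A_gt0 : 0 < A by apply: prodr_gt0.
have B_gt0 : 0 < B by apply: prodr_gt0.
have lr_root_sqr : lr_root k t w ^+ 2 = B / A.
  rewrite -prodrXl -prodf_div; apply: eq_bigr => r _.
  by rewrite sqr_sqrtr // divr_ge0 // ltW.
have lr_root_gt0 : 0 < lr_root k t w.
  by apply: prodr_gt0 => r _; rewrite sqrtr_gt0 divr_gt0.
rewrite -invf_div -lr_root_sqr lnV ?posrE ?exprn_gt0 // lerN2.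
exact: ln_sqr_le.
Qed.

Lemma cumloglik_uninformative k t w :
  k \notin informative -> cumloglik l s k t a b w = 0.
Proof.
rewrite inE negb_exists => /forallP same; rewrite /cumloglik.
under eq_bigr do rewrite (eqP (negbNE (same _))).
by rewrite divff ?ln1 // gt_eqF // prodr_gt0 // => r _; case: (l_distr k b).
Qed.

Definition deficit t w := \sum_(k in informative) 2 * lr_root k t w.

Lemma cumloglik_ge_deficit k t w : - deficit t w <= cumloglik l s k t a b w.
Proof.
have [k_inf | k_uninf] := boolP (k \in informative).
  apply: le_trans (cumloglik_ge_lr_root k t w).
  rewrite lerN2 /deficit (bigD1 k) //= lerDl.
  by apply: sumr_ge0 => j _; rewrite mulr_ge0 ?lr_root_ge0.
rewrite cumloglik_uninformative // oppr_le0.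
by apply: sumr_ge0 => j _; rewrite mulr_ge0 ?lr_root_ge0.
Qed.

Definition deficit_total T w := \sum_(r < T) deficit r.+1 w.

Definition cfg_deficit_total T (c : cfg T) :=
  \sum_(r < T) \sum_(k in informative) 2 * \prod_(q < T | (q < r.+1)%N) sqrt_lr (c q k).

Lemma cfg_deficit_total_ge0 T (c : cfg T) : 0 <= cfg_deficit_total c.
Proof.
apply: sumr_ge0 => r _; apply: sumr_ge0 => k _; rewrite mulr_ge0 //.
by apply: prodr_ge0 => q _; exact: sqrtr_ge0.
Qed.

Lemma deficit_total_signals T w : deficit_total T w = cfg_deficit_total (signals T w).
Proof.
apply: eq_bigr => r _; apply: eq_bigr => k _; congr (_ * _).
rewrite /lr_root (big_ord_widen T (fun q => sqrt_lr (s q.+1 k w))) //.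
by apply: eq_bigr => q _; rewrite ffunE fprodE.
Qed.

Lemma deficit_total_nondecreasing w :
  {homo deficit_total^~ w : T T' / (T <= T')%N >-> T <= T'}.
Proof.
apply/nondecreasing_seqP => T; rewrite /deficit_total big_ord_recr lerDl /=.
by apply: sumr_ge0 => k _; rewrite mulr_ge0 ?lr_root_ge0.
Qed.

Definition deficit_bound := \sum_(k in informative) 2 / (1 - bhatt_coef k).

Lemma deficit_bound_ge0 : 0 <= deficit_bound.
Proof.
apply: sumr_ge0 => k k_inf; rewrite divr_ge0 // subr_ge0 ltW //.
exact: bhatt_coef_lt1.
Qed.

Lemma sum_cfg_lik_deficit_total T :
  \sum_(c : cfg T) cfg_lik c * cfg_deficit_total c <= deficit_bound.
Proof.
have -> : \sum_(c : cfg T) cfg_lik c * cfg_deficit_total c =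
    \sum_(r < T) \sum_(k in informative) 2 * bhatt_coef k ^+ r.+1.
  rewrite /cfg_deficit_total; under eq_bigr do rewrite mulr_sumr; rewrite exchange_big.
  apply: eq_bigr => r _; under eq_bigr do rewrite mulr_sumr; rewrite exchange_big.
  apply: eq_bigr => k _; under eq_bigr do rewrite mulrCA.
  by rewrite -mulr_sumr sum_cfg_lik_sqrt_lr.
rewrite exchange_big; apply: ler_sum => k k_inf.
by rewrite -mulr_sumr ler_wpM2l // sum_exprS_le // bhatt_coef_ge0 bhatt_coef_lt1.
Qed.

End LikelihoodRatio.

Lemma measure_avoid_null_bigcup (R : realType) d (T : measurableType d)
    (P : probability T R) (N : set T) (E : nat -> set T) (c : R) :
  measurable N -> P N = 0%E -> (forall k, measurable (E k)) ->
  {homo E : k m / (k <= m)%N >-> k `<=` m} -> c < 1 ->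
  (forall k, (P (E k) <= c%:E)%E) ->
  exists w, ~ N w /\ forall k, ~ E k w.
Proof.
move=> mN PN0 mE E_mono c_lt1 PE_le.
have mU : measurable (\bigcup_k E k) by exact: bigcupT_measurable.
have PU_le : (P (\bigcup_k E k) <= c%:E)%E.
  have E_nd : {homo E : k m / (k <= m)%N >-> (k <= m)%O}.
    by move=> k m /E_mono/subsetPset.
  have E_cvg := nondecreasing_cvg_mu (mu := P) mE mU E_nd.
  rewrite -(cvg_lim _ E_cvg) //; apply: lime_le; first exact: cvgP E_cvg.
  exact: nearW.
have [//|no_good] := pselect (exists w, ~ N w /\ forall k, ~ E k w).
have cover : [set: T] `<=` N `|` \bigcup_k E k.
  move=> w _; have [Nw|Nw] := pselect (N w); [by left | right].
  apply: contrapT => notE; apply: no_good; exists w; split=> // k Ekw.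
  by apply: notE; exists k.
have : (1%:E <= c%:E)%E.
  rewrite -(probability_setT P); apply: le_trans (le_measure _ _ _ cover) _.
  - by rewrite inE.
  - by rewrite inE; exact: measurableU.
  by apply: le_trans (measureU2 P mN mU) _; move: PN0 => /= ->; rewrite add0e.
by rewrite lee_fin leNgt c_lt1.
Qed.

Section SignalLaw.
Variables (R : realType) (d : measure_display) (Omega : measurableType d).
Variables (P : probability Omega R) (n : nat) (Theta : finType) (S : 'I_n -> finType).
Variables (l : forall i, S i -> Theta -> R) (a : Theta).
Variable s : nat -> forall i, Omega -> S i.
Hypothesis l_distr : likelihoods l.
Hypothesis s_law : signal_model P a l s.

Local Notation cfg T := {ffun 'I_T -> fprod S}.

Lemma signals_eqP T (c : cfg T) w :
  signals s T w = c <-> forall (r : 'I_T) i, s r.+1 i w = c r i.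
Proof.
split=> [<- r i | s_eq]; first by rewrite ffunE fprodE.
by apply/ffunP => r; apply/fprodP => i; rewrite ffunE fprodE s_eq.
Qed.

Lemma measurable_signals_eq T (c : cfg T) : measurable [set w | signals s T w = c].
Proof.
have -> : [set w | signals s T w = c] =
    \bigcap_(r in [set: 'I_T]) \bigcap_(i in [set: 'I_n]) [set w | s r.+1 i w = c r i].
  apply/seteqP; split=> w /=; first by move=> /signals_eqP s_eq r _ i _.
  by move=> s_eq; apply/signals_eqP => r i; exact: s_eq r I i I.
apply: fin_bigcap_measurable => [|r _]; first exact: finite_finset.
apply: fin_bigcap_measurable => [|i _]; first exact: finite_finset.
exact: s_law.1.
Qed.

Lemma P_signals_eq T (c : cfg T) : P [set w | signals s T w = c] = (cfg_lik l a c)%:E.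
Proof.
case: T c => [|T] c.
  have -> : [set w | signals s 0 w = c] = setT.
    by apply/seteqP; split=> // w _; apply/signals_eqP => -[].
  by rewrite probability_setT /cfg_lik big_ord0.
pose a' t i := c (inord t.-1) i.
have -> : [set w | signals s T.+1 w = c] =
    [set w | forall t, (1 <= t <= T.+1)%N -> forall i, s t i w = a' t i].
  apply/seteqP; split=> w /= => [/signals_eqP s_eq t /andP[t_gt0 t_le] i | s_eq].
    have t_ord : (t.-1 < T.+1)%N by rewrite prednK.
    by have := s_eq (inord t.-1) i; rewrite inordK // prednK.
  by apply/signals_eqP => r i; rewrite s_eq //= /a' inord_val.
rewrite s_law.2 /cfg_lik big_add1 big_mkord; congr (_%:E).
by apply: eq_bigr => r _; apply: eq_bigr => i _; rewrite /a' /= inord_val.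
Qed.

Lemma signals_in_bigcup T (A : pred (cfg T)) :
  [set w | A (signals s T w)] = \bigcup_(c in [set c | A c]) [set w | signals s T w = c].
Proof. by apply/seteqP; split=> w /=; [exists (signals s T w) | case=> c /= Ac ->]. Qed.

Lemma measurable_signals_in T (A : pred (cfg T)) : measurable [set w | A (signals s T w)].
Proof.
rewrite signals_in_bigcup; apply: fin_bigcup_measurable => [|c _].
  exact: finite_finset.
exact: measurable_signals_eq.
Qed.

Lemma P_signals_in T (A : pred (cfg T)) :
  P [set w | A (signals s T w)] = (\sum_(c | A c) cfg_lik l a c)%:E.
Proof.
rewrite signals_in_bigcup measure_fin_bigcup; last 3 first.
- exact: finite_finset.
- by move=> c1 c2 _ _ [w [/= <- <-]].
- by move=> c _; exact: measurable_signals_eq.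
rewrite -sumEFin -(@bigfs _ _ _ _ (index_enum (cfg T)) A) ?index_enum_uniq //.
- by apply: eq_bigr => c _; exact: P_signals_eq.
- by move=> c _; rewrite mem_index_enum.
Qed.

Lemma markov_signals T (g : cfg T -> R) (M : R) : 0 < M -> (forall c, 0 <= g c) ->
  (P [set w | (M < g (signals s T w))%R] <= ((\sum_c cfg_lik l a c * g c) / M)%:E)%E.
Proof.
move=> M_gt0 g_ge0; rewrite (P_signals_in (fun c => M < g c)) lee_fin mulr_suml.
rewrite [X in _ <= X](bigID (fun c => M < g c)) /= -[X in X <= _]addr0 lerD //.
  apply: ler_sum => c gc_gt; rewrite ler_pdivlMr //.
  by apply: ler_wpM2l; [exact: cfg_lik_ge0 | exact: ltW].
apply: sumr_ge0 => c _; apply: divr_ge0 (ltW M_gt0).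
by apply: mulr_ge0 => //; exact: cfg_lik_ge0.
Qed.
End SignalLaw.

Lemma PL_true_state_not_ae_cvgNy (R : realType) (d : measure_display)
    (Omega : measurableType d) (P : probability Omega R)
    (n f : nat) (G : rel 'I_n) (F : {set 'I_n})
    (Theta : finType) (thstar : Theta) (S : 'I_n -> finType)
    (l : forall i, S i -> Theta -> R) (s : nat -> forall i, Omega -> S i)
    (adv : nat -> 'I_n -> 'I_n -> Theta -> Theta -> Omega -> R)
    (i : 'I_n) (th : Theta) :
  (#|F| <= f)%N -> likelihoods l -> signal_model P thstar l s -> i \notin F ->
  ~ {ae P, forall w, (fun t => PL f G F l s adv t i thstar th w) @ \oo --> -oo}.
Proof.
move=> card_F l_distr s_law i_honest [N [mN PN0 N_cover]].
set M := deficit_bound l thstar th + 1.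
have M_gt0 : 0 < M by rewrite ltr_wpDl ?(deficit_bound_ge0 _ _ l_distr).
pose E T := [set w | M < deficit_total l thstar th s T w].
have E_signals T : E T = [set w | M < cfg_deficit_total l thstar th (signals s T w)].
  by apply/seteqP; split=> w; rewrite /E /= deficit_total_signals.
have c_lt1 : deficit_bound l thstar th / M < 1 by rewrite ltr_pdivrMr // mul1r ltrDl.
have [w [Nw notE]] : exists w, ~ N w /\ forall T, ~ E T w.
  apply: (measure_avoid_null_bigcup mN PN0 _ _ c_lt1) => [T | T T' le_T w' | T].
  - rewrite E_signals.
    exact: (measurable_signals_in s_law (fun c : {ffun 'I_T -> fprod S} =>
      M < cfg_deficit_total l thstar th c)).
  - by move=> /= /lt_le_trans; apply; exact: deficit_total_nondecreasing.
  - have g_ge0 := cfg_deficit_total_ge0 l thstar th (T := T).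
    rewrite E_signals; apply: le_trans (markov_signals l_distr s_law M_gt0 g_ge0) _.
    by rewrite lee_fin ler_pM2r ?invr_gt0 // sum_cfg_lik_deficit_total.
have PL_ge t : - M <= PL f G F l s adv t i thstar th w.
  pose low t w := - deficit l thstar th s t w.
  have low_le k t' w' : low t'.+1 w' <= cumloglik l s k t'.+1 thstar th w'.
    exact: cumloglik_ge_deficit.
  apply: le_trans (PL_ge_sum G adv card_F low_le t w i_honest).
  by rewrite sumrN lerN2 leNgt; apply/negP; exact: notE.
have : (fun t => PL f G F l s adv t i thstar th w) @ \oo --> -oo.
  by apply: contrapT => not_cvg; apply: Nw; exact: N_cover.
move=> /cvgrNy_lt/(_ (- M))[t0 _ /(_ t0 (leqnn t0))] /=.
by rewrite ltNge PL_ge.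
Qed.

Theorem proposition1 (R : realType) (d : measure_display)
    (Omega : measurableType d) (P : probability Omega R)
    (n f : nat) (G : rel 'I_n) (F : {set 'I_n})
    (Theta : finType) (thstar : Theta) (S : 'I_n -> finType)
    (l : forall i, S i -> Theta -> R) (s : nat -> forall i, Omega -> S i)
    (adv : nat -> 'I_n -> 'I_n -> Theta -> Theta -> Omega -> R)
    (i : 'I_n) (thtilde : Theta) :
  (#|F| <= f)%N ->
  likelihoods l ->
  signal_model P thstar l s ->
  (forall H, reduced_graph f G F H -> exists! Sc, source_component F H Sc) ->
  (forall th, th != thstar -> forall H Sc, reduced_graph f G F H ->
     source_component F H Sc ->
     \sum_(j in Sc) KL (l j ^~ thstar) (l j ^~ th) != 0) ->
  i \notin F ->
  (forall th, th != thtilde ->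
     {ae P, forall w, (fun t => PL f G F l s adv t i thtilde th w) @ \oo --> +oo} /\
     {ae P, forall w, (fun t => PL f G F l s adv t i th thtilde w) @ \oo --> -oo}) ->
  thtilde = thstar.
Proof.
move=> card_F l_distr s_law _ _ i_honest cvg_PL.
have [//|neq_star] := eqVneq thtilde thstar.
have /cvg_PL[_ cvgNy] : thstar != thtilde by rewrite eq_sym.
by case: (PL_true_state_not_ae_cvgNy card_F l_distr s_law i_honest cvgNy).
Qed.
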